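(* Let $\mathbb{H}$ be a reproducing kernel Hilbert space with inner product $\langle\cdot,\cdot\rangle$ and feature map $\phi$, and let $(X,A,Y)$ be jointly distributed with $Y=\langle\phi(X),y\rangle$ and $A=\langle\phi(X),a\rangle$ for some nonzero $y,a\in\mathbb{H}$, with $\operatorname{Var}(Y),\operatorname{Var}(A)>0$. Then for every (possibly randomized) representation $Z=g(X)$ with $\operatorname{Var}\mathbb{E}[A\mid Z]=0$, $$\operatorname{Var}\mathbb{E}[Y\mid Z]\le \operatorname{Var}(Y)-\frac{\operatorname{Cov}(A,Y)^2}{\operatorname{Var}(A)}=\operatorname{Var}(Y)(1-\rho_{YA}^2),$$ where $\rho_{YA}$ is the correlation coefficient of $Y$ and $A$.
   Context: A (possibly randomized) representation is $Z=g(X,S)$ for a measurable $g$ and auxiliary randomness $S$ independent of $(X,A,Y)$. $\phi(X)$ is assumed to have finite second moment in $\mathbb{H}$. *)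

From HB Require Import structures.
From mathcomp Require Import all_boot all_order all_algebra.
From mathcomp Require Import all_classical all_reals all_analysis.
Set Implicit Arguments. Unset Strict Implicit. Unset Printing Implicit Defensive.
Import Order.TTheory GRing.Theory Num.Theory.
Local Open Scope classical_set_scope.
Local Open Scope ring_scope.

Section hilbert.
Context {R : realType} {H : lmodType R}.

Definition inner_product (ip : H -> H -> R) : Prop :=
  [/\ (forall f g, ip f g = ip g f),
      (forall (c : R) f g h, ip (c *: f + g) h = c * ip f h + ip g h),
      (forall f, 0 <= ip f f) &
      (forall f, ip f f = 0 -> f = 0)].

(** completeness of [H] for the metric d(f,g) = sqrt (ip (f-g) (f-g))
    (stated with squared distances). *)
Definition ip_complete (ip : H -> H -> R) : Prop :=
  forall u : nat -> H,
    (forall e : R, 0 < e -> exists N : nat, forall m n : nat,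
        (N <= m)%N -> (N <= n)%N -> ip (u m - u n) (u m - u n) < e) ->
    exists l : H, forall e : R, 0 < e -> exists N : nat, forall n : nat,
        (N <= n)%N -> ip (u n - l) (u n - l) < e.

Definition hilbert_space (ip : H -> H -> R) : Prop :=
  inner_product ip /\ ip_complete ip.

(** [H] (with inner product [ip]) is a reproducing kernel Hilbert space of
    real functions on [TX], realised through the injective linear map
    [ev : H -> (TX -> R)], with feature map [phi] :
    f(x) = <f, phi x>  (reproducing property). *)
Definition RKHS {TX : Type} (ip : H -> H -> R) (ev : H -> TX -> R)
    (phi : TX -> H) : Prop :=
  [/\ hilbert_space ip,
      (forall (c : R) f g x, ev (c *: f + g) x = c * ev f x + ev g x),
      injective ev &
      (forall f x, ev f x = ip f (phi x))].
End hilbert.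

Section condexp.
Context {d dZ : measure_display} {Omega : measurableType d}
  {TZ : measurableType dZ} {R : realType}.

Definition sigma_measurable (Z : Omega -> TZ) (W : Omega -> R) : Prop :=
  forall B : set R, measurable B ->
    exists C : set TZ, measurable C /\ W @^-1` B = Z @^-1` C.

Definition is_cond_exp (P : probability Omega R) (Z : Omega -> TZ)
    (V W : Omega -> R) : Prop :=
  [/\ sigma_measurable Z W,
      P.-integrable setT (fun w => (W w)%:E) &
      forall C : set TZ, measurable C ->
        (\int[P]_(w in Z @^-1` C) (W w)%:E =
         \int[P]_(w in Z @^-1` C) (V w)%:E)%E].
End condexp.

From HB Require Import structures.
From mathcomp Require Import all_boot all_order all_algebra.
From mathcomp Require Import all_classical all_reals all_analysis.
From mathcomp Require Import measurable_realfun ring lra.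
Set Implicit Arguments.
Unset Strict Implicit.
Unset Printing Implicit Defensive.

Import Order.TTheory GRing.Theory Num.Theory.
Local Open Scope classical_set_scope.
Local Open Scope ring_scope.

(* Since Var E[A | Z] = 0, E[A | Z] is almost surely a constant m, so the
   regression residual V = Y - lam A + lam m, lam = Cov(A, Y) / Var A, has the
   same conditional expectation E[Y | Z] as Y.  Conditional expectation does
   not increase the variance, hence
   Var E[Y | Z] <= Var V = Var Y - Cov(A, Y)^2 / Var A.
   That last inequality is proved from the defining property of E[V | Z]
   alone: on a slab {c <= W < c + e} of W = E[V | Z], which is a sigma(Z)-event,
   W^2 <= 2cW + e^2 - c^2, whose integral equals that of 2cV + e^2 - c^2 <= V^2 + e^2;
   summing over all slabs gives E[W^2] <= E[V^2] + e^2. *)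

Lemma floor_itvE (R : realType) (x e : R) (k : int) : 0 < e ->
  (k%:~R * e <= x < k%:~R * e + e) = (Num.floor (x / e) == k).
Proof.
move=> e0; have -> : (k%:~R * e <= x < k%:~R * e + e) = (k%:~R <= x / e < (k + 1)%:~R).
  by rewrite ler_pdivlMr // ltr_pdivrMr // intrD mulrDl mul1r.
by apply/idP/eqP => [/floor_def //| <-]; exact: floor_itv.
Qed.

Lemma inner_product_cauchy_schwarz (R : realType) (H : lmodType R)
    (ip : H -> H -> R) : inner_product ip ->
  forall f g, ip f g ^+ 2 <= ip f f * ip g g.
Proof.
case=> sym lin pos def f g.
have ip0 h : ip 0 h = 0.
  have := lin 1 0 0 h; rewrite scaler0 addr0 mul1r => E.
  by apply: (addrI (ip 0 h)); rewrite addr0 -E.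
have [g0|gpos] := eqVneq (ip g g) 0.
  by rewrite (def _ g0) (sym f) !ip0 expr0n mulr0.
have gp : 0 < ip g g by rewrite lt_neqAle eq_sym gpos pos.
pose t := ip f g / ip g g.
have quad : ip ((- t) *: g + f) ((- t) *: g + f) =
    t ^+ 2 * ip g g - 2 * t * ip f g + ip f f.
  by rewrite lin (sym g) lin (sym f ((- t) *: g + f)) lin (sym g f); ring.
have := pos ((- t) *: g + f); rewrite quad -(pmulr_rge0 _ gp).
have -> : ip g g * (t ^+ 2 * ip g g - 2 * t * ip f g + ip f f) =
    ip f f * ip g g - ip f g ^+ 2 by rewrite /t; field; rewrite gpos.
by rewrite subr_ge0.
Qed.

Section finite_measure_affine.
Context d (T : measurableType d) (R : realType)
  (mu : {finite_measure set T -> \bar R}).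

Lemma integral_EFin_cst (D : set T) (c : R) : measurable D ->
  (\int[mu]_(w in D) (cst c w)%:E = c%:E * mu D)%E.
Proof. by move=> mD; rewrite -integral_cst. Qed.

Lemma integrable_affine (D : set T) (f : T -> R) (a b : R) : measurable D ->
  mu.-integrable setT (EFin \o f) -> mu.-integrable D (fun w => (a * f w + b)%:E).
Proof.
move=> mD /(integrableS measurableT mD (@subsetT _ _)) iF.
apply: (@eq_integrable _ _ _ mu D mD (fun x => a%:E * (EFin \o f) x + (EFin \o cst b) x)%E).
  by move=> x _ /=; rewrite EFinD EFinM.
by apply: integrableD => //; [exact: integrableZl|exact: finite_measure_integrable_cst].
Qed.

Lemma integral_affine (D : set T) (f : T -> R) (a b : R) : measurable D ->
  mu.-integrable setT (EFin \o f) ->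
  (\int[mu]_(w in D) (a * f w + b)%:E =
   a%:E * \int[mu]_(w in D) (f w)%:E + b%:E * mu D)%E.
Proof.
move=> mD /(integrableS measurableT mD (@subsetT _ _)) iF.
rewrite (integralD_EFin mD (f1 := fun w => a * f w) (f2 := cst b)); last 2 first.
- apply: (@eq_integrable _ _ _ mu D mD (fun x => a%:E * (EFin \o f) x)%E).
    by move=> x _ /=; rewrite EFinM.
  exact: integrableZl.
- exact: finite_measure_integrable_cst.
by rewrite -integralZl // -integral_cst.
Qed.

Lemma Lfun2_integrable (f : T -> R) :
  f \in Lfun mu 2%:E -> mu.-integrable setT (EFin \o f).
Proof. by move=> f2; apply/Lfun1_integrable/Lfun_subset12 => //; exact: fin_num_measure. Qed.

Lemma Lfun2D (f g : T -> R) :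
  f \in Lfun mu 2%:E -> g \in Lfun mu 2%:E -> (f \+ g)%R \in Lfun mu 2%:E.
Proof. by move=> f2 g2; apply: rpredD => [|p|p]; [exact: lee1n|exact: f2|exact: g2]. Qed.

End finite_measure_affine.

Section sigma_measurable.
Context d dZ (Omega : measurableType d) (TZ : measurableType dZ) (R : realType)
  (Z : Omega -> TZ).

Lemma sigma_measurable_measurable (W : Omega -> R) : measurable_fun setT Z ->
  sigma_measurable Z W -> measurable_fun setT W.
Proof.
move=> mZ sW _ B mB; rewrite setTI; have [C [mC ->]] := sW _ mB.
by rewrite -[Z @^-1` C]setTI; exact: mZ.
Qed.

Lemma sigma_measurable_comp (W : Omega -> R) (f : R -> R) :
  measurable_fun setT f -> sigma_measurable Z W -> sigma_measurable Z (f \o W).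
Proof.
move=> mf sW B mB; have := mf measurableT B mB; rewrite setTI => mfB.
by have [C [mC eC]] := sW _ mfB; exists C; rewrite comp_preimage.
Qed.

Lemma sigma_measurable_cst (c : R) : sigma_measurable Z (cst c).
Proof.
move=> B _; have [Bc|nBc] := pselect (B c).
  by exists setT; split; rewrite // preimage_setT preimage_cst ifT ?inE.
by exists set0; split; rewrite // preimage_set0 preimage_cst ifF //;
  apply/negbTE/negP; rewrite inE.
Qed.

End sigma_measurable.

Section slab.
Context d (T : measurableType d) (R : realType) (W : T -> R) (e : R).

(* The slabs {k e <= W < k e + e}, k : int, indexed by the codes of int;
   a non-code gives set0. *)
Definition slab (i : nat) : set T :=
  if pickle_inv i is Some k then W @^-1` `[k%:~R * e, k%:~R * e + e[ else set0.

Lemma measurable_slab i : measurable_fun setT W -> measurable (slab i).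
Proof.
rewrite /slab => mW; case: (pickle_inv i) => [k|//].
by rewrite -[X in measurable X]setTI; apply: mW => //; exact: measurable_itv.
Qed.

Hypothesis e_gt0 : 0 < e.

Lemma bigcup_slab : \bigcup_i slab i = setT.
Proof.
apply/seteqP; split=> [//|w _]; exists (pickle (Num.floor (W w / e))); first by [].
by rewrite /slab pickleK_inv /= in_itv /= floor_itvE.
Qed.

Lemma trivIset_slab : trivIset setT slab.
Proof.
move=> i j _ _ [w []]; rewrite /slab.
case Ei: (pickle_inv i) => [k|//]; case Ej: (pickle_inv j) => [k'|//].
rewrite /= !in_itv /= !floor_itvE // => /eqP hk /eqP hk'.
by rewrite -(@pickle_invK int i) -(@pickle_invK int j) Ei Ej /= -hk -hk'.
Qed.

Lemma ge0_integral_slab (mu : {measure set T -> \bar R}) (f : T -> \bar R) :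
  measurable_fun setT W -> measurable_fun setT f -> (forall x, 0 <= f x)%E ->
  (\int[mu]_x f x = \sum_(i <oo) \int[mu]_(x in slab i) f x)%E.
Proof.
move=> mW mf f0; rewrite -ge0_integral_bigcup ?bigcup_slab //.
- by move=> i; exact: measurable_slab.
- exact: trivIset_slab.
Qed.

End slab.

Lemma variance_integral d (T : measurableType d) (R : realType)
    (P : probability T R) (f : T -> R) :
  ('V_P[f] = \int[P]_w ((f w - fine 'E_P[f]) ^+ 2)%:E)%E.
Proof.
rewrite /variance covariance.unlock {1}expectation.unlock.
by apply: eq_integral => w _; rewrite /= expr2.
Qed.

Section cond_exp.
Context d dZ (Omega : measurableType d) (TZ : measurableType dZ) (R : realType)
  (P : probability Omega R) (Z : Omega -> TZ).
Hypothesis mZ : measurable_fun setT Z.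

Let measurable_preimage C : measurable C -> measurable (Z @^-1` C).
Proof. by move=> mC; rewrite -[X in measurable X]setTI; exact: mZ. Qed.

Let integrable_preimage C (f : Omega -> R) : measurable C ->
  P.-integrable setT (EFin \o f) -> P.-integrable (Z @^-1` C) (EFin \o f).
Proof. by move=> mC; apply: integrableS => //; exact: measurable_preimage. Qed.

Lemma is_cond_exp_cst c : is_cond_exp P Z (cst c) (cst c).
Proof.
split => //; first exact: sigma_measurable_cst.
exact: finite_measure_integrable_cst.
Qed.

Lemma is_cond_expD_cst (V W U : Omega -> R) m :
  P.-integrable setT (EFin \o V) -> P.-integrable setT (EFin \o U) ->
  is_cond_exp P Z V W -> is_cond_exp P Z U (cst m) ->
  is_cond_exp P Z (V \+ U) (W \+ cst m).
Proof.
move=> iV iU [sW iW hW] [_ _ hU]; split.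
- by apply: (sigma_measurable_comp (f := fun x => x + m)) => //; exact: measurable_funD.
- by apply/Lfun1_integrable; apply: rpredD; [exact/Lfun1_integrable|exact: Lfun_cst].
- move=> C mC; have mZC := measurable_preimage mC.
  rewrite !integralD_EFin ?hW ?hU //.
  all: by [exact: integrable_preimage|exact: finite_measure_integrable_cst].
Qed.

Lemma is_cond_exp_affine_cst (V : Omega -> R) m a b :
  P.-integrable setT (EFin \o V) -> is_cond_exp P Z V (cst m) ->
  is_cond_exp P Z (fun w => a * V w + b) (cst (a * m + b)).
Proof.
move=> iV [_ _ hV]; split; first exact: sigma_measurable_cst.
  exact: finite_measure_integrable_cst.
move=> C mC; have mZC := measurable_preimage mC.
rewrite integral_EFin_cst // (integral_affine a b mZC iV) -hV // integral_EFin_cst //.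
by rewrite EFinD muleDl ?fin_num_measure // EFinM muleA.
Qed.

Lemma is_cond_exp_ae_cst (V W : Omega -> R) m : is_cond_exp P Z V W ->
  ae_eq P setT (EFin \o W) (cst m%:E) -> is_cond_exp P Z V (cst m).
Proof.
move=> [sW iW hW] Wm; split; first exact: sigma_measurable_cst.
  exact: finite_measure_integrable_cst.
move=> C mC; have mZC := measurable_preimage mC; rewrite -hW //.
apply/esym/ae_eq_integral => //; last first.
  by apply: filterS Wm => w /(_ I) Wmw _.
- by apply/measurable_EFinP; exact: measurable_cst.
- by apply/measurable_EFinP/measurable_funTS; exact: (sigma_measurable_measurable mZ sW).
Qed.


Lemma cond_exp_sqr_le_slab (V W : Omega -> R) (c e : R) : 0 < e ->
  P.-integrable setT (EFin \o V) ->
  P.-integrable setT (EFin \o (fun w => V w ^+ 2)) -> is_cond_exp P Z V W ->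
  (\int[P]_(w in W @^-1` `[c, (c + e)%R[) (W w ^+ 2)%:E <=
   \int[P]_(w in W @^-1` `[c, (c + e)%R[) ((V w ^+ 2 + e ^+ 2)%R)%:E)%E.
Proof.
move=> e0 iV iV2 [sW iW hW]; have mW := sigma_measurable_measurable mZ sW.
have [C [mC BC]] := sW _ (measurable_itv `[c, (c + e)%R[); rewrite BC.
set B := Z @^-1` C; have mB : measurable B by rewrite -[X in measurable X]setTI; exact: mZ.
apply: (@le_trans _ _ (\int[P]_(w in B) ((2 * c * W w + (e ^+ 2 - c ^+ 2))%R)%:E)%E).
  apply: ge0_le_integral => //.
  - by move=> x _; rewrite lee_fin sqr_ge0.
  - by apply/measurable_EFinP/measurable_funTS; exact: measurable_funX.
  - apply/measurable_EFinP/measurable_funTS; apply: measurable_funD => //.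
    exact: measurable_funM.
  - by move=> x; rewrite /B -BC /= in_itv /= => /andP[? ?]; rewrite lee_fin; nra.
rewrite integral_affine // hW // -integral_affine //.
apply: le_integral => //; first exact: integrable_affine.
- apply: (@eq_integrable _ _ _ P _ mB (fun w => ((1 * V w ^+ 2 + e ^+ 2)%R)%:E)).
    by move=> x _; rewrite mul1r.
  exact: integrable_affine.
- by move=> x _; rewrite lee_fin -subr_ge0 (_ : _ - _ = (V x - c) ^+ 2) ?sqr_ge0 //; ring.
Qed.

Lemma cond_exp_sqr_integral_le (V W : Omega -> R) :
  V \in Lfun P 2%:E -> is_cond_exp P Z V W ->
  (\int[P]_w (W w ^+ 2)%:E <= \int[P]_w (V w ^+ 2)%:E)%E.
Proof.
move=> V2 hVW; have [sW _ _] := hVW; have mW := sigma_measurable_measurable mZ sW.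
have mV : measurable_fun setT V by move: V2; rewrite inE => /andP[]; rewrite inE.
have [iV iV2] := (Lfun2_integrable V2, Lfun2_integrable_sqr V2).
apply/lee_addgt0Pr => e e0.
have [dl dl0 dl2] : exists2 dl : R, 0 < dl & dl ^+ 2 = e.
  by exists (Num.sqrt e); rewrite ?sqrtr_gt0 ?sqr_sqrtr ?ltW.
have -> : (\int[P]_w (V w ^+ 2)%:E + e%:E =
    \int[P]_w ((V w ^+ 2 + dl ^+ 2)%R)%:E)%E.
  rewrite (integralD_EFin measurableT (f1 := fun w => V w ^+ 2) (f2 := cst (dl ^+ 2))) //.
    rewrite integral_EFin_cst // [X in (_ * X)%E](_ : _ = 1%E) ?mule1 ?dl2 //.
    exact: probability_setT.
  exact: finite_measure_integrable_cst.
rewrite (ge0_integral_slab (W := W) dl0) //; last 2 first.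
- by apply/measurable_EFinP; exact: measurable_funX.
- by move=> x; rewrite lee_fin sqr_ge0.
rewrite [leRHS](ge0_integral_slab (W := W) dl0) //; last 2 first.
- by apply/measurable_EFinP; apply: measurable_funD => //; exact: measurable_funX.
- by move=> x; rewrite lee_fin addr_ge0 ?sqr_ge0.
apply: lee_nneseries => [i _ _|i _].
  by apply: integral_ge0 => x _; rewrite lee_fin sqr_ge0.
rewrite /slab; case: (pickle_inv i) => [k|]; last by rewrite !integral_set0.
exact: cond_exp_sqr_le_slab.
Qed.

Lemma expectation_cond_exp (V W : Omega -> R) :
  is_cond_exp P Z V W -> ('E_P[W] = 'E_P[V])%E.
Proof.
by case=> _ _ hW; rewrite !expectation.unlock; have := hW _ measurableT; rewrite preimage_setT.
Qed.

Lemma variance_cond_exp_le (V W : Omega -> R) :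
  V \in Lfun P 2%:E -> is_cond_exp P Z V W -> ('V_P[W] <= 'V_P[V])%E.
Proof.
move=> V2 hVW; pose mu := fine ('E_P[V])%E.
have hc := is_cond_expD_cst (Lfun2_integrable V2)
  (finite_measure_integrable_cst _ (- mu) measurableT) hVW (is_cond_exp_cst (- mu)).
rewrite !variance_integral (expectation_cond_exp hVW).
exact: cond_exp_sqr_integral_le (Lfun2D V2 (Lfun_cst _ _ _)) hc.
Qed.

End cond_exp.

Lemma variance_eq0_ae_cst d (T : measurableType d) (R : realType)
    (P : probability T R) (f : T -> R) : measurable_fun setT f ->
  'V_P[f] = 0%E -> ae_eq P setT (EFin \o f) (cst (fine 'E_P[f])%:E).
Proof.
move=> mf Vf0; pose m := fine 'E_P[f].
have mf2 : measurable_fun setT (fun w => ((f w - m) ^+ 2)%:E).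
  by apply/measurable_EFinP/measurable_funX/measurable_funB.
have : (\int[P]_w `|((f w - m) ^+ 2)%:E| = 0)%E.
  rewrite -Vf0 variance_integral; apply: eq_integral => w _.
  by rewrite gee0_abs // lee_fin sqr_ge0.
move/(ae_eq_integral_abs P measurableT mf2); apply: filterS => w /= fw0 _.
by case: (fw0 I) => /eqP; rewrite sqrf_eq0 subr_eq0 => /eqP ->.
Qed.

Lemma integrable_sqr_Lfun2 d (T : measurableType d) (R : realType)
    (mu : {measure set T -> \bar R}) (f : T -> R) : measurable_fun setT f ->
  mu.-integrable setT (EFin \o (fun w => f w ^+ 2)) -> f \in Lfun mu 2%:E.
Proof.
move=> mf /integrableP[_ fi]; apply/andP; split; first by rewrite inE.
rewrite inE /= /finite_norm unlock; apply: poweR_lty; apply: le_lt_trans fi.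
rewrite le_eqVlt; apply/orP; left.
by apply/eqP/eq_integral => x _ /=; rewrite normrX powR_mulrn.
Qed.

Lemma inner_product_Lfun2 d (T : measurableType d) (R : realType)
    (P : probability T R) (H : lmodType R) (ip : H -> H -> R) (F : T -> H) (h : H) :
  inner_product ip -> measurable_fun setT (fun w => ip (F w) h) ->
  P.-integrable setT (fun w => (ip (F w) (F w))%:E) ->
  (fun w => ip (F w) h) \in Lfun P 2%:E.
Proof.
move=> ipH mFh iF; apply: integrable_sqr_Lfun2 => //.
have iFh : P.-integrable setT (fun w => ((ip h h)%:E * (ip (F w) (F w))%:E)%E).
  exact: integrableZl.
apply: le_integrable iFh => //.
- by apply/measurable_EFinP; exact: measurable_funX.
- move=> w _; rewrite -EFinM !abse_EFin lee_fin ger0_norm ?sqr_ge0 // mulrC.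
  exact: le_trans (inner_product_cauchy_schwarz ipH _ _) (ler_norm _).
Qed.

Section variance_linear_combination.
Context d (T : measurableType d) (R : realType) (P : probability T R).
Variables (f g : T -> R).
Hypotheses (f2 : f \in Lfun P 2%:E) (g2 : g \in Lfun P 2%:E).

Lemma variance_add_scale (c : R) :
  'V_P[(f \+ c \o* g)%R] =
  (fine 'V_P[f] + c ^+ 2 * fine 'V_P[g] + 2 * c * fine (covariance P g f))%:E.
Proof.
have Pfin := fin_num_measure P _ measurableT.
have [f1 g1] := (Lfun_subset12 Pfin f2, Lfun_subset12 Pfin g2).
rewrite varianceD //; last by apply: Lfun_scale => //; rewrite ler1n.
rewrite varianceZ // covarianceZr ?Lfun2_mul_Lfun1 //.
rewrite covarianceC -(fineK (covariance_fin_num g1 f1 (Lfun2_mul_Lfun1 g2 f2))).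
rewrite -(fineK (variance_fin_num f2)) -(fineK (variance_fin_num g2)).
by rewrite -!EFinM -!EFinD mulrA.
Qed.

Lemma variance_regression_residual : fine 'V_P[g] != 0 ->
  'V_P[(f \+ (- (fine (covariance P g f) / fine 'V_P[g])) \o* g)%R] =
  (fine 'V_P[f] - fine (covariance P g f) ^+ 2 / fine 'V_P[g])%:E.
Proof. by move=> Vg0; rewrite variance_add_scale; congr EFin; field. Qed.

End variance_linear_combination.

Lemma regression_residual_corrE (R : rcfType) (vY vA c : R) :
  0 < vY -> 0 < vA -> vY - c ^+ 2 / vA = vY * (1 - (c / Num.sqrt (vY * vA)) ^+ 2).
Proof.
move=> vY0 vA0; rewrite expr_div_n sqr_sqrtr ?mulr_ge0 ?ltW //.
by field; rewrite !lt0r_neq0.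
Qed.

Theorem theorem3
  (R : realType)
  (d dX dS dZ : measure_display)
  (Omega : measurableType d) (P : probability Omega R)
  (TX : measurableType dX) (TS : measurableType dS) (TZ : measurableType dZ)
  (H : lmodType R) (ip : H -> H -> R) (ev : H -> TX -> R) (phi : TX -> H)
  (hH : RKHS ip ev phi)
  (X : Omega -> TX) (S : Omega -> TS) (g : TX * TS -> TZ)
  (y a : H)
  (mX : measurable_fun setT X) (mS : measurable_fun setT S)
  (mg : measurable_fun setT g)
  (* phi(X) is an H-valued random element with finite second moment *)
  (mphiX : forall h : H, measurable_fun setT (fun w => ip (phi (X w)) h))
  (mnorm : measurable_fun setT (fun w => ip (phi (X w)) (phi (X w))))
  (second_moment : P.-integrable setT (fun w => (ip (phi (X w)) (phi (X w)))%:E))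
  (* auxiliary randomness S independent of X (hence of (X, A, Y)) *)
  (indep : forall (B : set TX) (C : set TS), measurable B -> measurable C ->
     P (X @^-1` B `&` S @^-1` C) = (P (X @^-1` B) * P (S @^-1` C))%E)
  (hy : y != 0) (ha : a != 0)
  (vY : (0 < 'V_P[fun w => ip (phi (X w)) y])%E)
  (vA : (0 < 'V_P[fun w => ip (phi (X w)) a])%E) :
  let Yv := fun w => ip (phi (X w)) y in
  let Av := fun w => ip (phi (X w)) a in
  let Z := fun w => g (X w, S w) in
  forall EA EY : Omega -> R,
    is_cond_exp P Z Av EA -> is_cond_exp P Z Yv EY ->
    'V_P[EA] = 0%E ->
    let varY := fine 'V_P[Yv] in
    let varA := fine 'V_P[Av] in
    let cov := fine (covariance P Av Yv) in
    let rho := cov / Num.sqrt (varY * varA) in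
    ('V_P[EY] <= (varY - cov ^+ 2 / varA)%:E)%E /\
    varY - cov ^+ 2 / varA = varY * (1 - rho ^+ 2).
Proof.
move=> Yv Av Z EA EY hA hY vEA varY varA cov rho.
have [[ipH _] _ _ _] := hH.
have L2 h : (fun w => ip (phi (X w)) h) \in Lfun P 2%:E.
  exact: inner_product_Lfun2 ipH (mphiX h) second_moment.
have L1 h := Lfun2_integrable (L2 h).
have mZ : measurable_fun setT Z.
  by apply: measurableT_comp => //; exact: measurable_fun_pair.
have varA0 : 0 < varA by rewrite /varA -lte_fin fineK ?variance_fin_num ?L2.
have varY0 : 0 < varY by rewrite /varY -lte_fin fineK ?variance_fin_num ?L2.
pose m := fine 'E_P[EA]%E; pose lam := cov / varA.
have hAm : is_cond_exp P Z Av (cst m).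
  have [sA _ _] := hA; apply: (is_cond_exp_ae_cst mZ hA).
  exact: variance_eq0_ae_cst (sigma_measurable_measurable mZ sA) vEA.
have := is_cond_expD_cst mZ (L1 y) (integrable_affine (- lam) (lam * m) measurableT (L1 a))
  hY (is_cond_exp_affine_cst mZ (- lam) (lam * m) (L1 a) hAm).
rewrite (_ : EY \+ _ = EY); last by apply/funext => w /=; rewrite mulNr addNr addr0.
rewrite (_ : Yv \+ _ = (Yv \+ (- lam) \o* Av) \+ cst (lam * m))%R; last first.
  by apply/funext => w /=; rewrite addrA [_ * - lam]mulrC.
move=> /(variance_cond_exp_le mZ) VEY; split; last exact: regression_residual_corrE.
have L2res : (Yv \+ (- lam) \o* Av)%R \in Lfun P 2%:E.
  by apply: Lfun2D (L2 y) _; apply: Lfun_scale; [rewrite ler1n|exact: L2].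
apply: le_trans (VEY (Lfun2D L2res (Lfun_cst _ _ _))) _.
by rewrite varianceD_cst_r // variance_regression_residual ?gt_eqF ?L2.
Qed.
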